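(* Let $a,b,\alpha_1,\beta_1,\alpha_2,\beta_2\in\mathbb C$ and let $p,k\ge0$ be integers. Let $\mathbf F(x,y)=\prod_{j=0}^{p-1}(\alpha_1x+j-y+\beta_1)(\alpha_2x+j-y+\beta_2)$. Then the coefficient of $x^{2p}$ in the polynomial $\widetilde{\mathcal T}_k^{a,b}[(\mathbf F(x,i))_{i}]$ does not depend on $\beta_1,\beta_2$, and equals $$\sum_{j=0}^k\frac{k!}{(k-j)!}\sum_{i=0}^{p}\binom{p}{i}\binom{p}{2p-j-i}\alpha_1^i\alpha_2^{2p-i-j}\prod_{r=0}^{k-j-1}(a-b+j+r).$$
   Context: For integers $0\le i\le k$, $P_i^k(x;a,b):=\prod_{j=0}^{k-i-1}(x+j+a)\prod_{j=0}^{i-1}(x-j+b)$. For a sequence of polynomials $(a_i(x))_{i\ge0}$, $\widetilde{\mathcal T}_k^{a,b}[(a_i(x))_i]:=(-1)^k\sum_{i=0}^k(-1)^{k-i}\binom{k}{i}P_i^k(x;a,b)\,a_i(x)$. Binomial coefficients $\binom{p}{m}$ are $0$ for $m<0$ or $m>p$. *)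

From HB Require Import structures.
From mathcomp Require Import all_boot all_order all_algebra.
Set Implicit Arguments. Unset Strict Implicit. Unset Printing Implicit Defensive.
Import Order.TTheory GRing.Theory Num.Theory.
Local Open Scope ring_scope.

Definition Pik {C : comRingType} (i k : nat) (a b : C) : {poly C} :=
  (\prod_(j < k - i) ('X + (j%:R + a)%:P)) * (\prod_(j < i) ('X + (b - j%:R)%:P)).

Definition Ttilde {C : comRingType} (k : nat) (a b : C) (s : nat -> {poly C}) : {poly C} :=
  (-1) ^+ k * \sum_(i < k.+1)
     ((-1) ^+ (k - i) * ('C(k, i))%:R * Pik i k a b * s i).

Definition Fpoly {C : comRingType} (al1 be1 al2 be2 : C) (p : nat) (y : C) : {poly C} :=
  \prod_(j < p) ((al1 *: 'X + (j%:R - y + be1)%:P) * (al2 *: 'X + (j%:R - y + be2)%:P)).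

From mathcomp Require Import all_boot all_order all_algebra.
From mathcomp Require Import ring zify.
Set Implicit Arguments. Unset Strict Implicit. Unset Printing Implicit Defensive.
Import GRing.Theory Num.Theory.
Local Open Scope ring_scope.

(* Expand F(x, y) = prod_t (al_t x + ga_t - y) in the falling-factorial basis in y:
   F(x, y) = sum_j y^(j) c_j(x), with y^(j) = y (y - 1) ... (y - j + 1).  Each c_j has
   degree at most 2p - j, and its coefficient of x^(2p - j) is (-1)^j times that of
   prod_t (al_t x + 1), so the shifts ga_t (hence be1, be2) do not reach it.  By
   Chu-Vandermonde, T_k^{a,b} maps the sequence i^(j) to the constant
   (-1)^j k^(j) (a - b + j)(a - b + j + 1)...(a - b + k - 1) times the monic degree-j
   polynomial (x + b)^(j); hence only the top coefficients of the c_j contribute to the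
   coefficient of x^(2p) in T_k^{a,b}[F(x, i)]. *)

Section Factorials.
Variable R : comPzRingType.
Implicit Types u w : R.

Definition falling u m := \prod_(r < m) (u - r%:R).
Definition rising u m := \prod_(r < m) (u + r%:R).

Lemma falling0 u : falling u 0 = 1.
Proof. by rewrite /falling big_ord0. Qed.

Lemma fallingS u m : falling u m.+1 = falling u m * (u - m%:R).
Proof. by rewrite /falling big_ord_recr. Qed.

Lemma fallingD u m n : falling u (m + n) = falling u m * falling (u - m%:R) n.
Proof.
rewrite /falling big_split_ord; congr (_ * _).
by apply: eq_bigr => r _; rewrite natrD opprD addrA.
Qed.

Lemma fallingN u m : falling (- u) m = (-1) ^+ m * rising u m.
Proof.
rewrite /rising -[m in (-1) ^+ m]card_ord -prodrN.
by apply: eq_bigr => r _; rewrite opprD.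
Qed.

Lemma falling_natr i m : falling i%:R m = (i ^_ m)%:R.
Proof.
elim: m => [|m IHm]; first by rewrite falling0.
rewrite fallingS IHm ffactnSr natrM.
have [le_mi | lt_im] := leqP m i; first by rewrite natrB.
by rewrite ffact_small // !mul0r.
Qed.

Lemma fallingDn u w n :
  falling (u + w) n = \sum_(l < n.+1) 'C(n, l)%:R * falling u (n - l) * falling w l.
Proof.
elim: n => [|n IHn]; first by rewrite big_ord1 !falling0 !mulr1.
have step l : (l <= n)%N -> 'C(n, l)%:R * falling u (n - l) * falling w l * (u + w - n%:R)
    = 'C(n, l)%:R * falling u (n.+1 - l) * falling w l
      + 'C(n, l)%:R * falling u (n - l) * falling w l.+1.
  move=> le_ln; rewrite subSn // !fallingS -(subnK le_ln) natrD subnK //; ring.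
rewrite fallingS IHn mulr_suml.
rewrite (eq_bigr _ (fun (l : 'I_n.+1) _ => step l (ltn_ord l))) big_split /=.
rewrite big_ord_recl /= bin0 subn0 [in RHS]big_ord_recl /= bin0 subn0 -addrA.
congr (_ + _); under [in RHS]eq_bigr do rewrite binS natrD mulrDl mulrDl.
rewrite big_split /=; congr (_ + _).
rewrite [in RHS]big_ord_recr /= bin_small // mul0r mul0r addr0.
by apply: eq_bigr => i _; rewrite /bump /= add1n.
Qed.

End Factorials.

Lemma rmorph_falling (R S : comPzRingType) (f : {rmorphism R -> S}) u m :
  f (falling u m) = falling (f u) m.
Proof.
by rewrite rmorph_prod; apply: eq_bigr => r _; rewrite rmorphB rmorph_nat.
Qed.

Lemma bin_addl_ffact j n l : ('C(j + n, j + l) * (j + l) ^_ j = (j + n) ^_ j * 'C(n, l))%N.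
Proof.
have [le_ln | lt_nl] := leqP l n; last by rewrite !bin_small ?muln0 ?mul0n // ltn_add2l.
have fact_gt0 : (0 < l`! * (n - l)`!)%N by rewrite muln_gt0 !fact_gt0.
apply/eqP; rewrite -(eqn_pmul2r fact_gt0); apply/eqP.
have ffact_addl m : ((j + m) ^_ j * m`! = (j + m)`!)%N.
  by have := ffact_fact (leq_addr m j); rewrite addKn.
rewrite -mulnA [X in (_ * X)%N]mulnA ffact_addl -mulnA bin_fact // ffact_addl.
by have := @bin_fact (j + n) (j + l); rewrite leq_add2l subnDl; apply.
Qed.

Lemma natr_ffact_factd (F : numFieldType) n m : (m <= n)%N ->
  (n`!)%:R / ((n - m)`!)%:R = (n ^_ m)%:R :> F.
Proof.
move=> le_mn; rewrite -(ffact_fact le_mn) natrM mulfK //.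
by rewrite pnatr_eq0 -lt0n fact_gt0.
Qed.

Lemma eq_sum_ord_supp (V : nmodType) n m (F : 'I_n -> V) (G : 'I_m -> V) :
    (forall i : 'I_n, (m <= i)%N -> F i = 0) -> (forall i : 'I_m, (n <= i)%N -> G i = 0) ->
    (forall i (lt_in : (i < n)%N) (lt_im : (i < m)%N), F (Ordinal lt_in) = G (Ordinal lt_im)) ->
  \sum_(i < n) F i = \sum_(i < m) G i.
Proof.
move=> F0 G0 eqFG.
wlog le_nm : n m F G F0 G0 eqFG / (n <= m)%N.
  move=> base; have [le_nm | /ltnW le_mn] := leqP n m; first exact: base.
  by apply/esym/base => // i lt_im lt_in; rewrite eqFG.
rewrite (bigID (fun i : 'I_m => (i < n)%N)) /= [X in _ + X]big1 ?addr0; last first.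
  by move=> i; rewrite -leqNgt; apply: G0.
rewrite (big_ord_narrow le_nm); apply: eq_bigr => -[i lt_in] _.
by rewrite (eqFG i lt_in (leq_trans lt_in le_nm)); congr G; apply: val_inj.
Qed.

Section FallingExpansion.
Variable R : comNzRingType.
Implicit Types (s : seq (R * R)) (y : R).

Definition linprod s y : {poly R} := \prod_(t <- s) (t.1 *: 'X + (t.2 - y)%:P).

Definition linprod_top s : {poly R} := \prod_(t <- s) (t.1 *: 'X + 1).

(* [ffcoord s j] is the coordinate of [linprod s y] on [falling y j]; the recursion comes
   from (al X + ga - y) y^(j) = (al X + ga - j) y^(j) - y^(j+1). *)
Fixpoint ffcoord s j : {poly R} :=
  if s is t :: s' then
    (t.1 *: 'X + (t.2 - j%:R)%:P) * ffcoord s' j - (if j is j'.+1 then ffcoord s' j' else 0)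
  else (j == 0)%:R%:P.

Lemma coefZXaddCM (a d : R) (c : {poly R}) m :
  ((a *: 'X + d%:P) * c)`_m = (if m is m'.+1 then a * c`_m' else 0) + d * c`_m.
Proof.
by rewrite mulrDl coefD -scalerAl coefZ coefXM coefCM; case: m => [|m]; rewrite ?mulr0.
Qed.

Lemma size_linprod_top s : (size (linprod_top s) <= (size s).+1)%N.
Proof.
elim: s => [|t s IHs]; first by rewrite /linprod_top big_nil size_poly1.
rewrite /linprod_top big_cons -/(linprod_top s).
have size_lin : (size (t.1 *: 'X + 1 : {poly R})%R <= 2)%N.
  rewrite (leq_trans (size_polyD _ _)) // geq_max size_poly1 andbT.
  by rewrite (leq_trans (size_scale_leq _ _)) ?size_polyX.
apply: leq_trans (size_mul_leq _ _) _.
by rewrite -subn1 leq_subLR; exact: leq_add size_lin IHs.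
Qed.

Lemma coef_ffcoord_eq0 s j m : (size s < j + m)%N -> (ffcoord s j)`_m = 0.
Proof.
elim: s j m => [|t s IHs] j m /=.
  by rewrite coefC; case: j m => [|j] [|m].
move=> lt_s_jm; rewrite coefB coefZXaddCM IHs ?mulr0 ?addr0; last lia.
case: m lt_s_jm => [|m] lt_s_jm; case: j lt_s_jm => [|j] lt_s_jm //=.
all: rewrite ?coef0 !IHs ?mulr0 ?subrr //; lia.
Qed.

Lemma coef_ffcoord_top s j : (j <= size s)%N ->
  (ffcoord s j)`_(size s - j) = (-1) ^+ j * (linprod_top s)`_(size s - j).
Proof.
elim: s j => [|t s IHs] j.
  by rewrite leqn0 => /eqP->; rewrite /linprod_top big_nil /= expr0 mul1r.
rewrite /linprod_top big_cons -/(linprod_top s) -polyC1 /= => le_j_s.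
rewrite coefB !coefZXaddCM (@coef_ffcoord_eq0 s j) ?mulr0 ?addr0 ?mul1r; last lia.
have [-> | le_j_n] : j = (size s).+1 \/ (j <= size s)%N by lia.
  by have := IHs _ (leqnn _); rewrite !subnn /= => ->; rewrite exprS; ring.
rewrite subSn //= IHs //; case: j le_j_s le_j_n => [_ _ | j _ le_j_n].
  rewrite !subn0 coef0 (leq_sizeP _ _ (size_linprod_top s) (size s).+1) //.
  by rewrite expr0 subr0 addr0 !mul1r.
rewrite -subSn // IHs 1?ltnW // subSS exprS; ring.
Qed.

Lemma ffcoord_eq0 s j : (size s < j)%N -> ffcoord s j = 0.
Proof. by move=> lt_s_j; apply/polyP => m; rewrite coef0 coef_ffcoord_eq0 // ltn_addr. Qed.

Lemma linprod_ffE s y :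
  linprod s y = \sum_(j < (size s).+1) falling y j *: ffcoord s j.
Proof.
elim: s => [|t s IHs]; first by rewrite /linprod big_nil big_ord1 falling0 scale1r.
rewrite /linprod big_cons -/(linprod s y) IHs mulr_sumr /=.
have step (j : nat) : (t.1 *: 'X + (t.2 - y)%:P) * (falling y j *: ffcoord s j)
    = falling y j *: ((t.1 *: 'X + (t.2 - j%:R)%:P) * ffcoord s j)
      - falling y j.+1 *: ffcoord s j.
  by rewrite fallingS -!mul_polyC polyCM !polyCB; ring.
rewrite (eq_bigr _ (fun (j : 'I__) _ => step j)) sumrB.
under [in RHS]eq_bigr do rewrite scalerBr.
rewrite sumrB [in RHS]big_ord_recr /= ffcoord_eq0 // mulr0 scaler0 addr0.
congr (_ - _); rewrite [in RHS]big_ord_recl /= scaler0 add0r.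
by apply: eq_bigr => j _; rewrite /bump add1n.
Qed.

End FallingExpansion.

Section Coefficients.
Variable R : comNzRingType.

Lemma coefM_top (q c : {poly R}) d i : (d <= i)%N ->
  (size q <= d.+1)%N -> (size c <= (i - d).+1)%N -> (q * c)`_i = q`_d * c`_(i - d).
Proof.
move=> le_di /leq_sizeP q0 /leq_sizeP c0.
rewrite coefM (bigD1 (Ordinal (leq_ltn_trans le_di (ltnSn i)))) //=.
rewrite big1 ?addr0 // => l neq_ld.
have [lt_ld | lt_dl] : (l < d)%N \/ (d < l)%N.
- by move: neq_ld; rewrite -val_eqE /=; case: ltngtP; auto.
- by rewrite c0 ?mulr0 //; lia.
- by rewrite q0 ?mul0r.
Qed.

Lemma falling_XaddC (b : R) j : falling ('X + b%:P) j = \prod_(r < j) ('X - (r%:R - b)%:P).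
Proof. by apply: eq_bigr => r _; rewrite polyCB polyC_natr opprB addrA addrAC. Qed.

Lemma size_falling_XaddC (b : R) j : size (falling ('X + b%:P) j) = j.+1.
Proof.
by rewrite falling_XaddC size_prod_XsubC [index_enum _]unlock -enumT size_enum_ord.
Qed.

Lemma coef_falling_XaddC (b : R) j : (falling ('X + b%:P) j)`_j = 1.
Proof.
have /monicP := monic_prod_XsubC (index_enum 'I_j) xpredT (fun r : 'I_j => r%:R - b).
by rewrite -falling_XaddC lead_coefE size_falling_XaddC.
Qed.

Lemma coef_ZX1_exp (a : R) p m : ((a *: 'X + 1) ^+ p)`_m = 'C(p, m)%:R * a ^+ m.
Proof.
rewrite exprD1n coef_sum.
transitivity (\sum_(i < p.+1 | i == m :> nat) a ^+ i *+ 'C(p, i)).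
  rewrite [RHS]big_mkcond; apply: eq_bigr => i _; rewrite coefMn exprZn coefZ coefXn eq_sym.
  by case: eqP => _; rewrite ?mulr1 ?mulr0 ?mul0rn.
rewrite (big_ord1_eq _ (fun i => a ^+ i *+ 'C(p, i))).
by case: ltnP => [_ | lt_pm]; rewrite ?mulr_natl // bin_small // mul0r.
Qed.

Lemma coef_ZX1_expM (a1 a2 : R) p m :
  ((a1 *: 'X + 1) ^+ p * (a2 *: 'X + 1) ^+ p)`_m =
  \sum_(i < p.+1 | (i <= m)%N) 'C(p, i)%:R * 'C(p, m - i)%:R * a1 ^+ i * a2 ^+ (m - i).
Proof.
pose T i := 'C(p, i)%:R * 'C(p, m - i)%:R * a1 ^+ i * a2 ^+ (m - i).
transitivity (\sum_(i < m.+1) T i).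
  by rewrite coefM; apply: eq_bigr => i _; rewrite !coef_ZX1_exp /T; ring.
rewrite [RHS]big_mkcond; apply: eq_sum_ord_supp => [i lt_pi | i lt_mi | i lt_im _] /=.
- by rewrite /T bin_small // !mul0r.
- by rewrite leqNgt lt_mi.
- by rewrite -ltnS lt_im.
Qed.

End Coefficients.

Section Operator.
Variable R : comNzRingType.
Implicit Types (a b : R) (s : nat -> {poly R}).

Lemma Pik_rising_falling i k a b :
  Pik i k a b = rising ('X + a%:P) (k - i) * falling ('X + b%:P) i.
Proof.
congr (_ * _); apply: eq_bigr => r _.
  by rewrite polyCD polyC_natr addrA addrAC.
by rewrite polyCB polyC_natr addrA.
Qed.

Lemma eq_Ttilde k a b s1 s2 :
  (forall i, (i <= k)%N -> s1 i = s2 i) -> Ttilde k a b s1 = Ttilde k a b s2.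
Proof.
move=> eq_s; rewrite /Ttilde; congr (_ * _).
by apply: eq_bigr => i _; rewrite eq_s // -ltnS ltn_ord.
Qed.

Lemma Ttilde_sum k a b n (s : nat -> nat -> {poly R}) :
  Ttilde k a b (fun i => \sum_(j < n) s i j) = \sum_(j < n) Ttilde k a b (s^~ j).
Proof.
rewrite /Ttilde -mulr_sumr exchange_big /=; congr (_ * _).
by apply: eq_bigr => i _; rewrite mulr_sumr.
Qed.

Lemma TtildeMr k a b s q : Ttilde k a b (fun i => s i * q) = Ttilde k a b s * q.
Proof.
rewrite /Ttilde -mulrA mulr_suml; congr (_ * _).
by apply: eq_bigr => i _; rewrite mulrA.
Qed.

Lemma Ttilde_ffact_gt k j a b : (k < j)%N -> Ttilde k a b (fun i => (i ^_ j)%:R) = 0.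
Proof.
move=> lt_kj; rewrite /Ttilde big1 ?mulr0 // => i _.
by rewrite ffact_small ?mulr0n ?mulr0 // (leq_trans (ltn_ord i)).
Qed.

Lemma Ttilde_ffact k j a b : (j <= k)%N ->
  Ttilde k a b (fun i => (i ^_ j)%:R) =
  ((-1) ^+ j * (k ^_ j)%:R * rising (a - b + j%:R) (k - j))%:P * falling ('X + b%:P) j.
Proof.
move=> /subnKC <-; move: (k - j)%N => n; rewrite addKn.
rewrite /Ttilde -addnS big_split_ord /= big1 ?add0r; last first.
  by move=> i _; rewrite ffact_small ?mulr0n ?mulr0 //=.
have term (l : 'I_n.+1) :
    (-1) ^+ (j + n - (j + l)) * 'C(j + n, j + l)%:R * Pik (j + l) (j + n) a b
      * ((j + l) ^_ j)%:R
    = ((j + n) ^_ j)%:R * falling ('X + b%:P) j *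
      ('C(n, l)%:R * falling (- ('X + a%:P)) (n - l) * falling ('X + b%:P - j%:R) l).
  rewrite subnDl Pik_rising_falling subnDl fallingD fallingN.
  have := congr1 (GRing.natmul (1 : {poly R})) (bin_addl_ffact j n l).
  rewrite !natrM => bin_ffactE.
  transitivity ((-1) ^+ (n - l) * ('C(j + n, j + l)%:R * ((j + l) ^_ j)%:R)
    * (rising ('X + a%:P) (n - l) * falling ('X + b%:P) j * falling ('X + b%:P - j%:R) l));
    first ring.
  by rewrite bin_ffactE; ring.
rewrite (eq_bigr _ (fun l _ => term l)) -mulr_sumr -fallingDn.
have -> : - ('X + a%:P) + ('X + b%:P - j%:R) = (- (a - b + j%:R))%:P.
  by rewrite polyCN !polyCD polyCN polyC_natr; ring.
rewrite -(rmorph_falling polyC) fallingN /= !polyCM !polyC_exp !polyCN !polyC1.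
rewrite !polyC_natr exprD.
have sgnK : (-1) ^+ n * (-1) ^+ n = 1 :> {poly R}.
  by rewrite -exprD -signr_odd oddD addbb.
transitivity ((-1) ^+ j * ((-1) ^+ n * (-1) ^+ n) * ((j + n) ^_ j)%:R
  * (rising (a - b + j%:R) n)%:P * falling ('X + b%:P) j); first ring.
by rewrite sgnK mulr1.
Qed.

Lemma Ttilde_linprod k a b (s : seq (R * R)) :
  Ttilde k a b (fun i => linprod s i%:R) =
  \sum_(j < (size s).+1) Ttilde k a b (fun i => (i ^_ j)%:R) * ffcoord s j.
Proof.
pose t i j : {poly R} := (i ^_ j)%:R * ffcoord s j.
rewrite (@eq_Ttilde _ _ _ _ (fun i => \sum_(j < (size s).+1) t i j)) => [|i _].
  by rewrite Ttilde_sum; apply: eq_bigr => j _; rewrite TtildeMr.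
rewrite linprod_ffE; apply: eq_bigr => j _.
by rewrite /t falling_natr scaler_nat mulr_natl.
Qed.

Lemma coef_Ttilde_linprod k a b (s : seq (R * R)) n : size s = n ->
  (Ttilde k a b (fun i => linprod s i%:R))`_n =
  \sum_(j < n.+1 | (j <= k)%N)
    (k ^_ j)%:R * rising (a - b + j%:R) (k - j) * (linprod_top s)`_(n - j).
Proof.
move=> <-; rewrite Ttilde_linprod coef_sum [RHS]big_mkcond; apply: eq_bigr => j _.
have [le_jk | lt_kj] := leqP j k; last by rewrite Ttilde_ffact_gt // mul0r coef0.
have le_js : (j <= size s)%N by rewrite -ltnS.
rewrite Ttilde_ffact // -[_%:P * _ * _]mulrA coefCM (coefM_top le_js).
- by rewrite coef_falling_XaddC coef_ffcoord_top // mul1r mulrCA -!mulrA signrMK.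
- by rewrite size_falling_XaddC.
apply/leq_sizeP => m le_m; apply: coef_ffcoord_eq0; lia.
Qed.

End Operator.

Section Specialization.
Variable R : comNzRingType.

Definition lin_seq (al be : R) p : seq (R * R) := [seq (al, j%:R + be) | j <- iota 0 p].

Lemma size_lin_seq al be p : size (lin_seq al be p) = p.
Proof. by rewrite size_map size_iota. Qed.

Lemma Fpoly_linprod al1 be1 al2 be2 p y :
  Fpoly al1 be1 al2 be2 p y = linprod (lin_seq al1 be1 p ++ lin_seq al2 be2 p) y.
Proof.
have prod_iota (F : nat -> {poly R}) : \prod_(j <- iota 0 p) F j = \prod_(j < p) F j.
  by rewrite -(big_mkord xpredT F) /index_iota subn0.
rewrite /linprod big_cat !big_map !prod_iota /Fpoly big_split /=.
by congr (_ * _); apply: eq_bigr => j _; rewrite addrAC.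
Qed.

Lemma linprod_top_lin_seq al1 be1 al2 be2 p :
  linprod_top (lin_seq al1 be1 p ++ lin_seq al2 be2 p) =
  (al1 *: 'X + 1) ^+ p * (al2 *: 'X + 1) ^+ p.
Proof.
rewrite /linprod_top big_cat !big_map /= !big_const_seq !count_predT size_iota.
by rewrite !iter_mulr_1.
Qed.

End Specialization.

Theorem proposition6 (C : numClosedFieldType) (a b al1 be1 al2 be2 : C) (p k : nat) :
  (Ttilde k a b (fun i => Fpoly al1 be1 al2 be2 p i%:R))`_(2 * p) =
  \sum_(j < k.+1)
     ((k`!)%:R / ((k - j)`!)%:R *
      \sum_(i < p.+1 | (i + j <= 2 * p)%N)
         (('C(p, i))%:R * ('C(p, 2 * p - j - i))%:R * al1 ^+ i * al2 ^+ (2 * p - i - j)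
          * \prod_(r < k - j) (a - b + j%:R + r%:R))).
Proof.
have size_s : size (lin_seq al1 be1 p ++ lin_seq al2 be2 p) = (2 * p)%N.
  by rewrite size_cat !size_lin_seq addnn -mul2n.
rewrite (eq_Ttilde _ _ (fun i _ => Fpoly_linprod al1 be1 al2 be2 p i%:R)).
rewrite (coef_Ttilde_linprod _ _ _ size_s) linprod_top_lin_seq big_mkcond /=.
apply: eq_sum_ord_supp => [j lt_kj | j lt_2pj | j lt_j2p lt_jk] /=.
- by rewrite leqNgt lt_kj.
- by rewrite big_pred0 ?mulr0 // => i; rewrite leqNgt (leq_trans lt_2pj) ?leq_addl.
rewrite -ltnS lt_jk coef_ZX1_expM natr_ffact_factd // -mulrA mulr_sumr; congr (_ * _).
apply: eq_big => [i | i _]; first by rewrite leq_subRL 1?addnC // -ltnS.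
by rewrite [(2 * p - i - j)%N]subnAC mulrC.
Qed.
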